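(* Let $\mathcal G=G(n;S)$ be an integral circulant graph on $n$ vertices with symbol $S$. Then $\mathcal G$ is bipartite if and only if $n$ is even and $S=\bigcup_{f\in F}G_n(n/f)$ for a set $F$ of divisors of $n$ such that, for some integer $\ell_0$, every element of the set $\{2\ell_0/f : f\in F\}$ is an odd integer.
   Context: For an integer $n$ and a set $S\subseteq\{1,\dots,n-1\}$ such that $s\in S$ if and only if $n-s\in S$, the circulant graph $G(n;S)$ is the undirected graph on vertex set $\mathbb{Z}_n$ in which $i$ and $j$ are adjacent iff $i-j \bmod n\in S$. A graph is integral if all eigenvalues of its adjacency matrix are integers. For a divisor $d$ of $n$, $G_n(d)=\{k : 1\le k\le n-1,\ \gcd(k,n)=d\}$. *)

From HB Require Import structures.
From mathcomp Require Import all_boot all_order all_algebra all_field.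
Set Implicit Arguments. Unset Strict Implicit. Unset Printing Implicit Defensive.
Import Order.TTheory GRing.Theory Num.Theory.

(* Vertex set Z_n is represented by 'I_n; a symbol S is a set of residues. *)

Definition is_symbol (n : nat) (S : {set 'I_n}) : Prop :=
  (forall s : 'I_n, s \in S -> (0 < val s)%N) /\
  (forall s t : 'I_n, (val s + val t)%N = n -> (s \in S) = (t \in S)).

Definition diffmod (n : nat) (i j : 'I_n) : nat := ((val i + n - val j) %% n)%N.

Definition circ_adj (n : nat) (S : {set 'I_n}) (i j : 'I_n) : bool :=
  [exists s in S, val s == diffmod i j].

Definition circ_adjmx (n : nat) (S : {set 'I_n}) : 'M[algC]_n :=
  \matrix_(i, j) ((circ_adj S i j)%:R)%R.

Definition integral_circ (n : nat) (S : {set 'I_n}) : Prop :=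
  forall a : algC, eigenvalue (circ_adjmx S) a -> a \is a Num.int.

Definition bipartite_circ (n : nat) (S : {set 'I_n}) : Prop :=
  exists c : 'I_n -> bool, forall i j : 'I_n, circ_adj S i j -> c i != c j.

Definition Gn (n d : nat) : {set 'I_n} :=
  [set k : 'I_n | (0 < val k)%N && (gcdn (val k) n == d)].

(* An integral circulant symbol is a union of gcd classes G_n(d): for k prime to
   n / gcd(s, n), the Galois automorphism z |-> z^k of Q(zeta_n) fixes the integer
   eigenvalues lambda_j = sum_{s in S} zeta^(s j), and inverting this discrete
   Fourier transform shows that s is in S iff s k is.
   In a proper 2-colouring every step along an element of S switches colour, so
   closed walks have even length.  Walking n / gcd(s, n) times along s shows that
   the additive order n / gcd(s, n) of every s in S is even; walking a = s2 / h
   times along s1 and b = s1 / h times along n - s2 (h = gcd(s1, s2)) shows that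
   the coprime numbers a and b have equal parity, hence are odd.  So all
   elements of S, hence all orders, have the same 2-adic valuation e >= 1, and
   l0 = m 2^(e-1) works, m being the odd part of n.
   Conversely, if 2 l0 s is an odd multiple of n for every s in S, colouring i by
   the parity of floor(2 l0 i / n) is proper. *)

From HB Require Import structures.
From mathcomp Require Import all_boot all_order all_algebra all_field.
From mathcomp Require Import cyclic zify.
Set Implicit Arguments. Unset Strict Implicit. Unset Printing Implicit Defensive.
Import Order.TTheory GRing.Theory Num.Theory.

Lemma coprime_div_gcd (x y : nat) :
  0 < gcdn x y -> coprime (x %/ gcdn x y) (y %/ gcdn x y).
Proof.
move=> h_gt0; rewrite /coprime -(eqn_pmul2r h_gt0) mul1n muln_gcdl.
by rewrite !divnK ?dvdn_gcdl ?dvdn_gcdr.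
Qed.

Lemma logn2_eq_odd_cofactors (x y : nat) : 0 < x -> 0 < y ->
  odd (x %/ gcdn x y) = odd (y %/ gcdn x y) -> logn 2 x = logn 2 y.
Proof.
move=> x_gt0 y_gt0 odd_eq.
have h_gt0 : 0 < gcdn x y by rewrite gcdn_gt0 x_gt0.
have odd_x : odd (x %/ gcdn x y).
  apply/negPn/negP => even_x; move/eqP: (coprime_div_gcd h_gt0) => gcd1.
  have : 2 %| gcdn (x %/ gcdn x y) (y %/ gcdn x y).
    by rewrite dvdn_gcd !dvdn2 -odd_eq even_x.
  by rewrite gcd1.
have logn_gcd z : 0 < z -> gcdn x y %| z -> odd (z %/ gcdn x y) ->
    logn 2 z = logn 2 (gcdn x y).
  move=> z_gt0 h_dvd odd_z.
  have cofactor_gt0 : 0 < z %/ gcdn x y by rewrite divn_gt0 // dvdn_leq.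
  by rewrite -{1}(divnK h_dvd) lognM // (@logn_coprime _ (z %/ _)) ?coprime2n.
by rewrite (logn_gcd x) ?(logn_gcd y) -?odd_eq ?dvdn_gcdl ?dvdn_gcdr.
Qed.

Lemma odd_quotients (n e : nat) (F : seq nat) : 0 < n -> 0 < e ->
  (forall f, f \in F -> f %| n /\ logn 2 f = e) ->
  exists l, forall f, f \in F -> exists2 k, odd k & 2 * l = k * f.
Proof.
move=> n_gt0 e_gt0 F_e.
have [m m_odd nE] := pfactor_coprime (isT : prime 2) n_gt0.
exists (m * 2 ^ e.-1) => f /F_e[f_dvd f_logn].
have [q q_odd fE] := pfactor_coprime (isT : prime 2) (dvdn_gt0 n_gt0 f_dvd).
have q_dvd : q %| m.
  rewrite -(@Gauss_dvdl _ _ (2 ^ logn 2 n)) -?nE; last by apply: coprimeXr; rewrite coprime_sym.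
  by apply: dvdn_trans f_dvd; rewrite fE dvdn_mulr.
exists (m %/ q); first by apply: dvdn_odd (dvdn_div q_dvd) _; rewrite -coprime2n.
by rewrite fE f_logn [RHS]mulnA divnK // mulnCA -expnS prednK.
Qed.

Lemma coprime_scale_mod (m a b : nat) : 0 < m -> coprime a m -> coprime b m ->
  exists2 k, coprime k m & a * k = b %[mod m].
Proof.
move=> m_gt0 a_coprime b_coprime.
exists (b * a ^ (totient m).-1); first by rewrite coprimeMl b_coprime coprimeXl.
rewrite mulnCA -expnS prednK ?totient_gt0 //.
by rewrite -modnMmr (Euler_exp_totient a_coprime) modnMmr muln1.
Qed.

Section ModularShift.
Variables (n : nat) (n_gt0 : 0 < n).

Definition ord_mod (x : nat) : 'I_n := Ordinal (ltn_pmod x n_gt0).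

Lemma ord_mod_id (i : 'I_n) : ord_mod i = i.
Proof. by apply: val_inj; rewrite /= modn_small. Qed.

Lemma diffmod_ord_mod (a : nat) (s : 'I_n) : diffmod (ord_mod (a + s)) (ord_mod a) = s.
Proof.
have a_le : a %% n <= n by rewrite ltnW ?ltn_pmod.
rewrite /diffmod /= -addnBA // modnDml {1}(divn_eq a n).
have -> : a %/ n * n + a %% n + s + (n - a %% n) = a %/ n * n + (s + n) by lia.
by rewrite modnMDl modnDr modn_small.
Qed.

Lemma circ_adjE (S : {set 'I_n}) (i j s : 'I_n) :
  val s = diffmod i j -> circ_adj S i j = (s \in S).
Proof.
move=> sE; apply/existsP/idP => [[t /andP[tS /eqP tE]] | sS].
  by have -> : s = t by apply: val_inj; rewrite sE tE.
by exists s; rewrite sS sE eqxx.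
Qed.

Lemma circ_adj_ord_mod (S : {set 'I_n}) (a : nat) (s : 'I_n) :
  circ_adj S (ord_mod (a + s)) (ord_mod a) = (s \in S).
Proof. exact/circ_adjE/esym/diffmod_ord_mod. Qed.

End ModularShift.

Lemma sum_root_of_unity_eq0 (R : idomainType) (w : R) (n : nat) :
  (w ^+ n = 1 -> w != 1 -> \sum_(j < n) w ^+ j = 0)%R.
Proof.
move=> wn w_neq1; have : ((w - 1) * \sum_(j < n) w ^+ j = 0)%R.
  by rewrite -subrX1 wn subrr.
by move/eqP; rewrite mulf_eq0 subr_eq0 (negbTE w_neq1) => /eqP.
Qed.

Section Eigenvalues.
Variables (n : nat) (n_gt0 : 0 < n) (S : {set 'I_n}) (z : algC).
Local Open Scope ring_scope.
Hypothesis z_prim : n.-primitive_root z.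

Definition circ_eig (j : nat) : algC := \sum_(s in S) z ^+ (s * j).

Lemma expr_prim_mod (x j : nat) : z ^+ (x %% n * j) = z ^+ (x * j).
Proof. by rewrite !exprM (prim_expr_mod z_prim). Qed.

Lemma eigenvalue_circ_eig (j0 : nat) : eigenvalue (circ_adjmx S) (circ_eig j0).
Proof.
apply/eigenvalueP; exists (\row_(i < n) z ^+ (i * j0)); last first.
  apply/eqP => /rowP/(_ (Ordinal n_gt0)); rewrite !mxE mul0n expr0 => /eqP.
  by rewrite oner_eq0.
apply/rowP => j; rewrite !mxE.
have shift_inj : injective (fun s : 'I_n => ord_mod n_gt0 (j + s)).
  move=> x y /(congr1 (fun w => diffmod w (ord_mod n_gt0 j))).
  by rewrite !diffmod_ord_mod; apply: val_inj.
rewrite (reindex_inj shift_inj) /= /circ_eig mulr_suml [RHS]big_mkcond /=.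
apply: eq_bigr => s _; rewrite !mxE -[X in circ_adj _ _ X](ord_mod_id n_gt0) circ_adj_ord_mod.
by case: (s \in S); rewrite ?mulr1 ?mulr0 // expr_prim_mod mulnDl exprD mulrC.
Qed.

Lemma prim_expr_neq0 (i : nat) : z ^+ i != 0.
Proof.
apply/expf_neq0/eqP => z0; move: (prim_expr_order z_prim).
by rewrite z0 expr0n gtn_eqF // => /eqP; rewrite eq_sym oner_eq0.
Qed.

Lemma circ_eig_inversion (t : 'I_n) :
  \sum_(j < n) circ_eig j / z ^+ (t * j) = n%:R * (t \in S)%:R.
Proof.
transitivity (\sum_(s in S) \sum_(j < n) (z ^+ s / z ^+ t) ^+ j).
  rewrite exchange_big /=; apply: eq_bigr => j _; rewrite mulr_suml.
  by apply: eq_bigr => s _; rewrite exprMn exprVn -!exprM.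
have ratio_n (s : 'I_n) : (z ^+ s / z ^+ t) ^+ n = 1.
  by rewrite exprMn exprVn -!exprM !(mulnC _ n) !exprM (prim_expr_order z_prim) !expr1n invr1 mulr1.
have ratio_neq1 (s : 'I_n) : s != t -> z ^+ s / z ^+ t != 1.
  apply: contra_neq => /(canRL (divfK (prim_expr_neq0 t))); rewrite mul1r.
  by move/eqP; rewrite (eq_prim_root_expr z_prim) !modn_small // => /eqP/val_inj.
case tS: (t \in S).
  rewrite (bigD1 t) //= mulfV ?prim_expr_neq0 // [X in _ + X]big1 => [|s /andP[_ st]].
    by under eq_bigr do rewrite expr1n; rewrite sumr_const card_ord addr0 mulr1.
  by rewrite sum_root_of_unity_eq0 ?ratio_neq1.
rewrite big1 ?mulr0 // => s sS; rewrite sum_root_of_unity_eq0 ?ratio_neq1 //.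
by apply: contraTneq sS => ->; rewrite tS.
Qed.

Lemma mem_integral_circ_scale (s : 'I_n) (d m k : nat) : integral_circ S ->
  (d * m = n)%N -> (d %| s)%N -> coprime k m ->
  (ord_mod n_gt0 (s * k) \in S) = (s \in S).
Proof.
move=> S_integral dm d_dvd km.
have [nu nuE] := Qn_aut_exists km.
have nu_root (j : nat) : nu (z ^+ (s * j)) = z ^+ (ord_mod n_gt0 (s * k) * j).
  rewrite nuE; last first.
    case/dvdnP: d_dvd => [s' ->]; rewrite -exprM.
    have -> : (s' * d * j * m = n * (s' * j))%N by rewrite -dm; lia.
    by rewrite exprM (prim_expr_order z_prim) expr1n.
  by rewrite -exprM /= expr_prim_mod mulnAC.
have nu_eig (j : nat) : nu (circ_eig j) = circ_eig j.
  by have /S_integral/intrP[e ->] := eigenvalue_circ_eig j; rewrite rmorph_int.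
have := congr1 nu (circ_eig_inversion s).
rewrite rmorph_sum rmorphM !rmorph_nat.
under eq_bigr do rewrite rmorphM fmorphV nu_eig nu_root.
have n_neq0 : n%:R != 0 :> algC by rewrite pnatr_eq0 -lt0n.
rewrite circ_eig_inversion => /(mulfI n_neq0)/eqP; rewrite eqr_nat.
by case: (_ \in S); case: (_ \in S).
Qed.

End Eigenvalues.

Lemma integral_circ_gcd_closed (n : nat) (S : {set 'I_n}) (s t : 'I_n) :
  integral_circ S -> s \in S -> gcdn s n = gcdn t n -> t \in S.
Proof.
move=> S_integral sS gcd_st.
have n_gt0 : 0 < n by apply: leq_ltn_trans (ltn_ord s).
have [z z_prim] := C_prim_root_exists n_gt0.
have g_gt0 : 0 < gcdn s n by rewrite gcdn_gt0 n_gt0 orbT.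
have gm : gcdn s n * (n %/ gcdn s n) = n by rewrite mulnC divnK ?dvdn_gcdr.
have m_gt0 : 0 < n %/ gcdn s n by rewrite divn_gt0 // dvdn_leq ?dvdn_gcdr.
have t'_coprime : coprime (t %/ gcdn s n) (n %/ gcdn s n).
  by rewrite gcd_st coprime_div_gcd // -gcd_st.
(* With s = g s', t = g t' and n = g m, a unit k mod m with s' k = t' mod m
   gives s k = t mod n. *)
have [k k_coprime s'k] := coprime_scale_mod m_gt0 (coprime_div_gcd g_gt0) t'_coprime.
suff <- : ord_mod n_gt0 (s * k) = t.
  by rewrite (mem_integral_circ_scale n_gt0 z_prim S_integral gm) ?dvdn_gcdl.
have -> : s * k = gcdn s n * (s %/ gcdn s n * k).
  by rewrite mulnA [_ * (s %/ _)]mulnC divnK ?dvdn_gcdl.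
apply: val_inj; rewrite /= -[X in _ %% X]gm -muln_modr s'k muln_modr gm.
by rewrite (mulnC (gcdn s n)) divnK ?modn_small // gcd_st dvdn_gcdl.
Qed.

Definition symbol_orders (n : nat) (S : {set 'I_n}) : seq nat :=
  [seq n %/ gcdn (val s) n | s <- enum S].

Section BipartiteIntegral.
Variables (n : nat) (n_gt0 : 0 < n) (S : {set 'I_n}).
Hypotheses (S_symbol : is_symbol S) (S_integral : integral_circ S).

Lemma symbol_gcd_mem (s : 'I_n) : s \in S -> exists2 t : 'I_n, t \in S & val t = gcdn s n.
Proof.
move=> sS; have s_gt0 := S_symbol.1 s sS.
have g_lt_n : gcdn s n < n by apply: leq_ltn_trans (ltn_ord s); rewrite dvdn_leq ?dvdn_gcdl.
exists (Ordinal g_lt_n) => //.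
by apply: integral_circ_gcd_closed S_integral sS _; rewrite /= -gcdnA gcdnn.
Qed.

Lemma symbol_orders_cover : S = \bigcup_(f <- symbol_orders S) Gn n (n %/ f).
Proof.
have orderK (s : 'I_n) : n %/ (n %/ gcdn s n) = gcdn s n by rewrite divnA ?dvdn_gcdr ?mulKn.
rewrite big_map big_enum /=; apply/setP => t; apply/idP/bigcupP => [tS | [s sS]].
  by exists t; rewrite // orderK inE S_symbol.1 ?eqxx.
rewrite orderK inE => /andP[_ /eqP gcd_ts].
exact: integral_circ_gcd_closed S_integral sS (esym gcd_ts).
Qed.

Variable c : 'I_n -> bool.
Hypothesis c_proper : forall i j, circ_adj S i j -> c i != c j.

Lemma colour_walk (s : 'I_n) (x k : nat) : s \in S ->
  c (ord_mod n_gt0 (x + k * s)) = c (ord_mod n_gt0 x) (+) odd k.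
Proof.
move=> sS; elim: k => [|k IHk]; first by rewrite mul0n addn0 addbF.
have := c_proper (etrans (circ_adj_ord_mod n_gt0 S (x + k * s) s) sS).
by rewrite mulSnr addnA IHk /=; case: (c _); case: (c _); case: (odd k).
Qed.

Lemma closed_walk_odd_eq (s1 s2 : 'I_n) (a b : nat) : s1 \in S -> s2 \in S ->
  (a * s1 + b * s2) %% n = 0 -> odd a = odd b.
Proof.
move=> s1S s2S closed.
have walk_a := colour_walk 0 a s1S; rewrite add0n in walk_a.
have := colour_walk (a * s1) b s2S; rewrite walk_a.
have -> : ord_mod n_gt0 (a * s1 + b * s2) = ord_mod n_gt0 0.
  by apply: val_inj; rewrite /= closed mod0n.
by case: (c _); case: (odd a); case: (odd b).
Qed.

Lemma symbol_order_even (s : 'I_n) : s \in S -> ~~ odd (n %/ gcdn s n).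
Proof.
move=> sS; rewrite (closed_walk_odd_eq (b := 0) sS sS) // mul0n addn0.
by rewrite mulnC (muln_divCA (dvdn_gcdl _ _) (dvdn_gcdr _ _)) modnMr.
Qed.

Lemma bipartite_n_even : S != set0 -> ~~ odd n.
Proof.
case/set0Pn=> s sS; apply: contra (symbol_order_even sS).
exact/dvdn_odd/dvdn_div/dvdn_gcdr.
Qed.

Lemma logn2_symbol_eq (s1 s2 : 'I_n) : s1 \in S -> s2 \in S -> logn 2 s1 = logn 2 s2.
Proof.
move=> s1S s2S; have [S_pos S_sym] := S_symbol.
have s2_gt0 := S_pos s2 s2S.
have neg_s2_lt : n - s2 < n by rewrite ltn_subrL s2_gt0 n_gt0.
have neg_s2S : Ordinal neg_s2_lt \in S by rewrite -(S_sym s2) //= subnKC // ltnW.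
apply: logn2_eq_odd_cofactors => //; first exact: S_pos.
symmetry; apply: (closed_walk_odd_eq s1S neg_s2S) => /=.
by rewrite mulnC muln_divCA_gcd [s2 * _]mulnC -mulnDr subnKC ?modnMl // ltnW.
Qed.

Lemma logn2_symbol_order_eq (s1 s2 : 'I_n) : s1 \in S -> s2 \in S ->
  logn 2 (n %/ gcdn s1 n) = logn 2 (n %/ gcdn s2 n).
Proof.
move=> s1S s2S; rewrite !logn_div ?dvdn_gcdr //.
have [t1 t1S <-] := symbol_gcd_mem s1S; have [t2 t2S <-] := symbol_gcd_mem s2S.
by rewrite (logn2_symbol_eq t1S t2S).
Qed.

Lemma symbol_orders_odd_quotients : S != set0 ->
  exists l, forall f, f \in symbol_orders S -> exists2 k, odd k & 2 * l = k * f.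
Proof.
case/set0Pn=> s0 s0S; apply: (odd_quotients (e := logn 2 (n %/ gcdn s0 n)) n_gt0).
  have order_gt0 : 0 < n %/ gcdn s0 n.
    by rewrite divn_gt0 ?gcdn_gt0 ?n_gt0 ?orbT // dvdn_leq ?dvdn_gcdr.
  by rewrite logn_gt0 mem_primes dvdn2 symbol_order_even // order_gt0.
move=> f /mapP[s]; rewrite mem_enum => sS ->.
by rewrite dvdn_div ?dvdn_gcdr // (logn2_symbol_order_eq sS s0S).
Qed.

End BipartiteIntegral.

Lemma bipartite_of_odd_multiples (n : nat) (S : {set 'I_n}) (L : nat) : ~~ odd L ->
  (forall s : 'I_n, s \in S -> exists2 k, odd k & s * L = k * n) -> bipartite_circ S.
Proof.
move=> L_even S_mult; exists (fun i : 'I_n => odd (i * L %/ n)).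
move=> i j /existsP[s /andP[sS /eqP sE]]; have [k k_odd sL] := S_mult s sS.
have n_gt0 : 0 < n by apply: leq_ltn_trans (ltn_ord i).
have ijE : i + n = j + s + (i + n - j) %/ n * n.
  rewrite sE /diffmod -addnA [_ %% n + _]addnC -divn_eq subnKC //.
  exact: leq_trans (ltnW (ltn_ord j)) (leq_addl i n).
have : L + i * L %/ n = k + (i + n - j) %/ n * L + j * L %/ n.
  rewrite -!divnMDl //; congr (_ %/ n).
  have := congr1 (muln^~ L) ijE; rewrite /= !mulnDl sL; lia.
move/(congr1 odd); rewrite !oddD oddM (negbTE L_even) andbF k_odd /=.
by case: (odd _); case: (odd _).
Qed.

Lemma Gn_odd_multiple (n f k : nat) (s : 'I_n) : f %| n -> odd k -> ~~ odd (k * f) ->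
  s \in Gn n (n %/ f) -> exists2 u, odd u & s * (k * f) = u * n.
Proof.
move=> f_dvd k_odd kf_even; rewrite inE => /andP[s_gt0 /eqP s_gcd].
have n_gt0 : 0 < n by apply: leq_ltn_trans (ltn_ord s).
have f_even : ~~ odd f by rewrite oddM k_odd in kf_even.
have g_dvd : n %/ f %| s by rewrite -s_gcd dvdn_gcdl.
have s'_coprime : coprime (s %/ (n %/ f)) f.
  have := coprime_div_gcd (x := s) (y := n); rewrite gcdn_gt0 n_gt0 orbT s_gcd.
  by rewrite [n %/ (n %/ f)]divnA // mulKn // => /(_ isT).
exists (s %/ (n %/ f) * k).
  by rewrite oddM k_odd andbT -coprimen2 (coprime_dvdr _ s'_coprime) ?dvdn2.
transitivity (s %/ (n %/ f) * k * (n %/ f * f)); last by rewrite divnK.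
by rewrite -{1}(divnK g_dvd); nia.
Qed.

Unset Implicit Arguments.

Theorem theorem3 (n : nat) (S : {set 'I_n}) :
  (0 < n)%N -> is_symbol S -> S != set0 -> integral_circ S ->
  bipartite_circ S <->
  (~~ odd n /\
   exists F : seq nat,
     (forall f, f \in F -> f %| n)%N /\
     S = \bigcup_(f <- F) Gn n (n %/ f)%N /\
     exists l0 : int, forall f, f \in F ->
       exists k : int, (2 * l0 = k * (f%:Z))%R /\ odd `|k|%N).
Proof.
move=> n_gt0 S_symbol S_ne0 S_integral; split.
- case=> c c_proper; split; first exact: bipartite_n_even c_proper S_ne0.
  exists (symbol_orders S); split; first by move=> f /mapP[s _ ->]; exact/dvdn_div/dvdn_gcdr.
  split; first exact: symbol_orders_cover.
  have [l l_odd] := symbol_orders_odd_quotients n_gt0 S_symbol S_integral c_proper S_ne0.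
  exists (Posz l) => f /l_odd[k k_odd lE]; exists (Posz k).
  by rewrite -!PoszM lE.
- case=> _ [F [F_dvd [S_cover [l0 l0_odd]]]].
  apply: (bipartite_of_odd_multiples (L := 2 * `|l0|)); first by rewrite oddM.
  move=> s; rewrite S_cover (big_morph (fun A : {set _} => s \in A) (in_setU s) (in_set0 s)).
  rewrite big_has => /hasP[f fF sG].
  have [k [lE k_odd]] := l0_odd f fF.
  have LE : 2 * `|l0| = `|k| * f by have := congr1 absz lE; rewrite !abszM.
  by rewrite LE; apply: Gn_odd_multiple (F_dvd f fF) k_odd _ sG; rewrite -LE oddM.
Qed.
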